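(* Let $m\ge2$ and let $C=\mathrm{diag}(c_1,\dots,c_m)$ be a real diagonal matrix. Let $\mathcal S_m$, $\mathcal D_m$, $\mu$, $\dot P_m$ and the quantum SLD Fisher metric $\langle\cdot,\cdot\rangle$ be as in the context. Let $\Lambda(w)=-\frac12 w^TCw$ on $\mathcal S_m$, with gradient (with respect to the metric $u^Tu'$ on $T_w\mathcal S_m=\{u: w^Tu=0\}$) $\mathrm{grad}\,\Lambda(w)=-Cw+(w^TCw)w$, and let $\mu_\ast\mathrm{grad}\,\Lambda$ be the vector field on $\mathcal D_m$ defined by $\mu_\ast\mathrm{grad}\,\Lambda(\mu(w))=\mu_{\ast,w}(\mathrm{grad}\,\Lambda(w))$ for $w\in\mathcal S_m$. Let $L$ be a smooth function on $\dot P_m$ and $\mathrm{grad}\,L$ its gradient with respect to the quantum SLD Fisher metric. If $L(\mu(w))=4\Lambda(w)$ for all $w\in\mathcal S_m$, then for every $\Theta\in\mathcal D_m$ and every $Z\in T_\Theta\mathcal D_m$, $$\langle \mathrm{grad}\,L(\Theta),Z\rangle_\Theta=\langle\mu_\ast\mathrm{grad}\,\Lambda(\Theta),Z\rangle_\Theta.$$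
   Context: $\mathcal S_m=\{w\in\mathbf R^m:\|w\|=1,\ w_k\ne0\ \forall k\}$; $\mathcal D_m=\{\mathrm{diag}(\theta_1,\dots,\theta_m):\sum\theta_k=1,\theta_k>0\}$ with $T_\Theta\mathcal D_m$ the traceless real diagonal matrices; $\mu(w)=\mathrm{diag}(w_1^2,\dots,w_m^2)$ with differential $\mu_{\ast,w}(u)=2\,\mathrm{diag}(w_1u_1,\dots,w_mu_m)$. (The vector field $\mu_\ast\mathrm{grad}\,\Lambda$ is well defined since $\mathrm{grad}\,\Lambda$ is equivariant under sign changes of coordinates and $\mu$ is invariant under them.) $\dot P_m$ is the set of $m\times m$ complex Hermitian positive definite trace-one matrices, $T_\rho\dot P_m$ the Hermitian traceless matrices. The SLD $\mathcal L_\rho(\Xi)$ is the Hermitian solution of $\frac12(\rho\mathcal L_\rho(\Xi)+\mathcal L_\rho(\Xi)\rho)=\Xi$, and the quantum SLD Fisher metric is $\langle\Xi,\Xi'\rangle_\rho=\frac12\mathrm{tr}[\rho(\mathcal L_\rho(\Xi)\mathcal L_\rho(\Xi')+\mathcal L_\rho(\Xi')\mathcal L_\rho(\Xi))]$. The gradient $\mathrm{grad}\,L(\rho)\in T_\rho\dot P_m$ is defined by $\langle\mathrm{grad}\,L(\rho),\Xi\rangle_\rho=\frac{d}{d\tau}\big|_{\tau=0}L(r(\tau))$ for every smooth curve $r$ in $\dot P_m$ with $r(0)=\rho$, $r'(0)=\Xi$. *)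

From mathcomp Require Import all_boot all_order all_algebra.
From mathcomp Require Import all_classical all_reals all_analysis.
From mathcomp Require Export complex.
Import GRing.Theory Num.Theory ComplexField.
Local Open Scope ring_scope.
Local Open Scope classical_set_scope.

Set Implicit Arguments. Unset Strict Implicit. Unset Printing Implicit Defensive.

Section QSLD.
Variables (R : realType) (m : nat).

Definition reC (z : R[i]) : R := complex.Re z.
Definition imC (z : R[i]) : R := complex.Im z.

Definition adj (A : 'M[R[i]]_m) : 'M[R[i]]_m := (map_mx conjc A)^T.

Definition hermitian (A : 'M[R[i]]_m) : Prop := adj A = A.

Definition posdef (A : 'M[R[i]]_m) : Prop :=
  forall v : 'cV[R[i]]_m, v != 0 ->
    0 < ((map_mx conjc v)^T *m A *m v) ord0 ord0.

Definition Pdot : set 'M[R[i]]_m :=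
  [set A | hermitian A /\ posdef A /\ \tr A = 1].

Definition TPdot : set 'M[R[i]]_m := [set A | hermitian A /\ \tr A = 0].

Definition is_sld (rho Xi X : 'M[R[i]]_m) : Prop :=
  hermitian X /\ (2%:R : R[i])^-1 *: (rho *m X + X *m rho) = Xi.

Definition sld (rho Xi : 'M[R[i]]_m) : 'M[R[i]]_m :=
  xget 0 [set X | is_sld rho Xi X].

Definition qmetric (rho Xi Xi' : 'M[R[i]]_m) : R[i] :=
  (2%:R)^-1 * \tr (rho *m (sld rho Xi *m sld rho Xi' + sld rho Xi' *m sld rho Xi)).

Definition smooth_fun (f : R -> R) : Prop :=
  forall (n : nat) (x : R), derivable (derive1n n f) x 1.

Definition smooth_curve (r : R -> 'M[R[i]]_m) : Prop :=
  forall i j, smooth_fun (fun t => reC (r t i j)) /\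
              smooth_fun (fun t => imC (r t i j)).

Definition velocity0 (r : R -> 'M[R[i]]_m) (Xi : 'M[R[i]]_m) : Prop :=
  forall i j, is_derive (0:R) (1:R) (fun t => reC (r t i j)) (reC (Xi i j)) /\
              is_derive (0:R) (1:R) (fun t => imC (r t i j)) (imC (Xi i j)).

Definition curve_in_Pdot (r : R -> 'M[R[i]]_m) : Prop :=
  exists2 eps : R, 0 < eps & forall t : R, `|t| < eps -> Pdot (r t).

Definition is_qgradient (L : 'M[R[i]]_m -> R) (gradL : 'M[R[i]]_m -> 'M[R[i]]_m)
  : Prop :=
  forall rho, Pdot rho ->
    TPdot (gradL rho) /\
    forall (r : R -> 'M[R[i]]_m) (Xi : 'M[R[i]]_m),
      smooth_curve r -> curve_in_Pdot r -> r 0 = rho -> velocity0 r Xi ->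
      exists d : R, is_derive (0:R) (1:R) (L \o r) d /\
                    qmetric rho (gradL rho) Xi = (d%:C)%C.

Definition Sm : set 'cV[R]_m :=
  [set w | \sum_k (w k ord0) ^+ 2 = 1 /\ forall k, w k ord0 != 0].

Definition cdiag (v : 'rV[R]_m) : 'M[R[i]]_m := diag_mx (map_mx (fun x => (x%:C)%C) v).

Definition Dm : set 'M[R[i]]_m :=
  [set T | exists theta : 'rV[R]_m,
     (forall k, 0 < theta ord0 k) /\ \sum_k theta ord0 k = 1 /\ T = cdiag theta].

Definition TDm : set 'M[R[i]]_m :=
  [set Z | exists z : 'rV[R]_m, \sum_k z ord0 k = 0 /\ Z = cdiag z].

Definition mu (w : 'cV[R]_m) : 'M[R[i]]_m := cdiag (\row_k (w k ord0 ^+ 2)).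

Definition mu_diff (w u : 'cV[R]_m) : 'M[R[i]]_m :=
  cdiag (\row_k (2%:R * (w k ord0 * u k ord0))).

Definition Lambda (c : 'rV[R]_m) (w : 'cV[R]_m) : R :=
  - (2%:R)^-1 * (w^T *m diag_mx c *m w) ord0 ord0.

Definition gradLambda (c : 'rV[R]_m) (w : 'cV[R]_m) : 'cV[R]_m :=
  - (diag_mx c *m w) + (w^T *m diag_mx c *m w) ord0 ord0 *: w.

(* the vector field mu_* grad Lambda on D_m : its value at Theta = mu(w) is
   mu_{*,w}(grad Lambda(w)); we use the preimage w_k = sqrt(theta_k) in S_m *)
Definition muGradLambda (c : 'rV[R]_m) (T : 'M[R[i]]_m) : 'M[R[i]]_m :=
  let w := \col_k Num.sqrt (reC (T k k)) in mu_diff w (gradLambda c w).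

End QSLD.

From Pilot Require Import Defs.
From mathcomp Require Import all_boot all_order all_algebra.
From mathcomp Require Import all_classical all_reals all_analysis.
From mathcomp Require Import complex ring.
Import Order.TTheory GRing.Theory Num.Theory ComplexField.
Import numFieldNormedType.Exports.
Local Open Scope ring_scope.

Set Implicit Arguments.
Unset Strict Implicit.

(* On the diagonal states Theta = diag(theta), theta_k > 0, the SLD of a
   Hermitian A is (2 A_ij / (theta_i + theta_j)), so for Z = diag(z) the SLD
   metric <A, Z>_Theta = tr(A L_Theta(Z)) = sum_k A_kk z_k / theta_k sees only
   the diagonal of A.  There L is known: L(diag v) = L(mu(sqrt v)) =
   4 Lambda(sqrt v) = -2 sum_k c_k v_k, which is affine in v; differentiating
   along t |-> diag(theta + t z) gives <grad L(Theta), Z> = -2 sum_k c_k z_k.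
   The same number comes from mu_* grad Lambda(Theta) =
   diag(2 (<c, theta> - c_k) theta_k), because sum_k z_k = 0. *)

Section AffineFunctions.
Variable R : realType.
Local Open Scope classical_set_scope.

Lemma is_derive_affine (a b x : R) : is_derive x 1 (fun t : R => a + t * b) b.
Proof.
apply: (is_derive_eq (is_deriveD (is_derive_cst a x 1)
  (is_deriveM (is_derive_id x (1:R)) (is_derive_cst b x 1)))).
by rewrite add0r scaler0 add0r [_%:A]mulr1.
Qed.

Lemma smooth_fun_affine (a b : R) : smooth_fun (fun t : R => a + t * b).
Proof.
have derive1_affine a' b' : derive1 (fun t : R => a' + t * b') = (fun t => b' + t * 0).
  apply: funext => t.
  by rewrite derive1E (@derive_val _ _ _ _ _ _ _ (is_derive_affine a' b' t)) mulr0 addr0.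
move=> n x.
have [a' [b' ->]] : exists a' b', derive1n n (fun t : R => a + t * b) = (fun t => a' + t * b').
  elim: n => [|n [a' [b' IH]]]; first by exists a, b; rewrite derive1n0.
  by exists b', 0; rewrite derive1nS IH derive1_affine.
exact: (@ex_derive _ _ _ _ _ _ _ (is_derive_affine a' b' x)).
Qed.

Lemma near0_affine_gt0 (a b : R) : 0 < a -> \forall t \near 0, 0 < a + t * b.
Proof.
move=> a_gt0.
have affine_cvg : (fun t : R => a + t * b) @ 0 --> a + 0 * b.
  by apply: cvgD; [exact: cvg_cst | apply: cvgM; [exact: cvg_id | exact: cvg_cst]].
rewrite mul0r addr0 in affine_cvg.
exact: cvgr_gt affine_cvg _ a_gt0.
Qed.

Lemma is_derive_near_affine (f : R -> R) (a b d : R) :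
  (\forall t \near 0, f t = a + t * b) -> is_derive (0:R) (1:R) f d -> d = b.
Proof.
move=> fE /(near_eq_is_derive fE) affine_d.
rewrite -(@derive_val _ _ _ _ _ _ _ affine_d).
exact: (@derive_val _ _ _ _ _ _ _ (is_derive_affine a b 0)).
Qed.
End AffineFunctions.

Section DiagonalStates.
Variables (R : realType) (m : nat).
Implicit Types (th v z : 'rV[R]_m) (A X : 'M[R[i]]_m).

Lemma cdiagE v i j : cdiag v i j = ((v 0 i)%:C)%C *+ (i == j).
Proof. by rewrite !mxE. Qed.

Lemma reC_cdiag v i j : reC (cdiag v i j) = v 0 i *+ (i == j).
Proof. by rewrite cdiagE; case: (i == j). Qed.

Lemma imC_cdiag v i j : imC (cdiag v i j) = 0.
Proof. by rewrite cdiagE; case: (i == j). Qed.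

Lemma cdiag_hermitian v : Defs.hermitian (cdiag v).
Proof.
apply/matrixP => i j; rewrite /adj !mxE eq_sym.
by case: eqP => [->|_]; rewrite ?conjc_real ?conjc0.
Qed.

Lemma mxtrace_mul_cdiag A v : \tr (A *m cdiag v) = \sum_k A k k * ((v 0 k)%:C)%C.
Proof. by apply: eq_bigr => k _; rewrite mul_mx_diag !mxE. Qed.

Lemma Pdot_cdiag v : (forall k, 0 < v 0 k) -> \sum_k v 0 k = 1 -> Pdot (cdiag v).
Proof.
move=> v_gt0 v_sum1; split; [exact: cdiag_hermitian | split].
  move=> x x_neq0; have [k xk_neq0] : exists k, x k 0 != 0.
    apply/existsP; apply: contraNT x_neq0 => /existsPn x0.
    by apply/eqP/matrixP => i j; rewrite ord1 mxE; apply/eqP; rewrite -[_ == _]negbK x0.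
  have termE j : ((map_mx conjc x)^T *m cdiag v) 0 j * x j 0
      = ((v 0 j)%:C)%C * (x j 0 * (x j 0)^*)%C.
    by rewrite /cdiag mul_mx_diag !mxE; ring.
  rewrite mxE (eq_bigr _ (fun j _ => termE j)) (bigD1 k) //=.
  apply: ltr_wpDr.
    apply: sumr_ge0 => j _.
    by apply: mulr_ge0; [rewrite lecR ltW | exact: mul_conjC_ge0].
  by apply: mulr_gt0; [rewrite ltcR | rewrite mul_conjC_gt0].
have -> : (1 : R[i]) = ((\sum_k v 0 k)%:C)%C by rewrite v_sum1.
by rewrite /cdiag mxtrace_diag rmorph_sum; apply: eq_bigr => k _; rewrite mxE.
Qed.

Lemma hermitianE A : Defs.hermitian A -> forall i j, A i j = (A j i)^*%C.
Proof. by move=> hA i j; rewrite -{1}hA /adj !mxE. Qed.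

Lemma is_sld_sld rho A X : is_sld rho A X -> is_sld rho A (sld rho A).
Proof. by move=> sldX; exact: (xgetPex 0 (ex_intro _ X sldX)). Qed.

Lemma qmetric_sldE rho A X Xi :
  is_sld rho A X -> qmetric rho A Xi = \tr (A *m sld rho Xi).
Proof.
move=> /is_sld_sld [_ SA]; rewrite -{2}SA /qmetric.
set S := sld rho A; set Y := sld rho Xi.
rewrite -scalemxAl mxtraceZ mulmxDl mulmxDr !mxtraceD; congr (_ * (_ + _)).
  by rewrite mulmxA.
by rewrite mulmxA mxtrace_mulC mulmxA.
Qed.

Lemma half_anticomm_cdiagE v X i j :
  ((2 : R[i])^-1 *: (cdiag v *m X + X *m cdiag v)) i j
  = 2^-1 * ((v 0 i + v 0 j)%:C)%C * X i j.
Proof. by rewrite /cdiag mul_diag_mx mul_mx_diag !mxE rmorphD; ring. Qed.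

Section PositiveDiagonal.
Variable th : 'rV[R]_m.
Hypothesis th_gt0 : forall k, 0 < th 0 k.

Let realC_neq0 (x : R) : 0 < x -> (x%:C)%C != 0 :> R[i].
Proof. by move=> x_gt0; rewrite -[0]/((0:R)%:C)%C (inj_eq (@complexI _)) lt0r_neq0. Qed.

Let th_neq0 k : ((th 0 k)%:C)%C != 0 :> R[i].
Proof. exact: realC_neq0. Qed.

Let th_add_neq0 i j : ((th 0 i + th 0 j)%:C)%C != 0 :> R[i].
Proof. by apply: realC_neq0; rewrite addr_gt0. Qed.

Let two_neq0 : (2 : R[i]) != 0.
Proof. by rewrite pnatr_eq0. Qed.

Lemma is_sld_cdiag_uniq A X Y :
  is_sld (cdiag th) A X -> is_sld (cdiag th) A Y -> X = Y.
Proof.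
move=> [_ XA] [_ YA]; apply/matrixP => i j.
have /matrixP/(_ i j) := etrans XA (esym YA).
rewrite !half_anticomm_cdiagE -!mulrA => /(mulfI (invr_neq0 two_neq0)).
exact: mulfI.
Qed.

Lemma is_sld_cdiag A : Defs.hermitian A ->
  is_sld (cdiag th) A (\matrix_(i, j) (2 * A i j / ((th 0 i + th 0 j)%:C)%C)).
Proof.
move=> hA; split.
  apply/matrixP => i j; rewrite /adj !mxE (hermitianE hA i j) addrC.
  by rewrite !rmorphM fmorphV rmorph_nat /= oppr0.
apply/matrixP => i j; rewrite half_anticomm_cdiagE mxE.
by field; rewrite -rmorphD th_add_neq0.
Qed.

Lemma sld_cdiag z : sld (cdiag th) (cdiag z) = cdiag (\row_k (z 0 k / th 0 k)).
Proof.
have sld_z : is_sld (cdiag th) (cdiag z) (cdiag (\row_k (z 0 k / th 0 k))).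
  split; first exact: cdiag_hermitian.
  apply/matrixP => i j; rewrite half_anticomm_cdiagE !cdiagE mxE.
  case: eqP => [<-|_]; rewrite ?mulr0n ?mulr0 // !mulr1n rmorphD fmorph_div /=.
  by field; exact: th_neq0.
exact: is_sld_cdiag_uniq (is_sld_sld sld_z) sld_z.
Qed.

Lemma qmetric_cdiag A z : Defs.hermitian A ->
  qmetric (cdiag th) A (cdiag z) = \sum_k A k k * ((z 0 k / th 0 k)%:C)%C.
Proof.
move=> hA; rewrite (qmetric_sldE _ (is_sld_cdiag hA)) sld_cdiag mxtrace_mul_cdiag.
by apply: eq_bigr => k _; rewrite mxE.
Qed.

End PositiveDiagonal.

End DiagonalStates.

Section SquaringMap.
Variables (R : realType) (m : nat) (c : 'rV[R]_m).

Definition sqrt_col (v : 'rV[R]_m) : 'cV[R]_m := \col_k Num.sqrt (v 0 k).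

Lemma quad_form_diagE (w : 'cV[R]_m) :
  (w^T *m diag_mx c *m w) 0 0 = \sum_k c 0 k * w k 0 ^+ 2.
Proof. by rewrite mul_mx_diag mxE; apply: eq_bigr => k _; rewrite !mxE; ring. Qed.

Lemma LambdaE (w : 'cV[R]_m) : Lambda c w = - 2^-1 * \sum_k c 0 k * w k 0 ^+ 2.
Proof. by rewrite /Lambda quad_form_diagE. Qed.

Lemma gradLambdaE (w : 'cV[R]_m) k :
  gradLambda c w k 0 = ((w^T *m diag_mx c *m w) 0 0 - c 0 k) * w k 0.
Proof. by rewrite /gradLambda mul_diag_mx !mxE; ring. Qed.

Lemma sqrt_colK (v : 'rV[R]_m) k : 0 <= v 0 k -> sqrt_col v k 0 ^+ 2 = v 0 k.
Proof. by move=> v_ge0; rewrite mxE sqr_sqrtr. Qed.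

Lemma mu_sqrt_col (v : 'rV[R]_m) : (forall k, 0 <= v 0 k) -> mu (sqrt_col v) = cdiag v.
Proof. by move=> v_ge0; congr cdiag; apply/rowP => k; rewrite mxE sqrt_colK. Qed.

Lemma Sm_sqrt_col (v : 'rV[R]_m) :
  (forall k, 0 < v 0 k) -> \sum_k v 0 k = 1 -> Sm (sqrt_col v).
Proof.
move=> v_gt0 v_sum1; split.
  by rewrite -v_sum1; apply: eq_bigr => k _; rewrite sqrt_colK // ltW.
by move=> k; rewrite mxE lt0r_neq0 // sqrtr_gt0.
Qed.

Lemma muGradLambda_cdiag (th : 'rV[R]_m) : (forall k, 0 <= th 0 k) ->
  muGradLambda c (cdiag th)
  = cdiag (\row_k (2 * (\sum_l c 0 l * th 0 l - c 0 k) * th 0 k)).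
Proof.
move=> th_ge0; rewrite /muGradLambda.
have -> : \col_k Num.sqrt (reC (cdiag th k k)) = sqrt_col th.
  by apply/colP => k; rewrite [LHS]mxE reC_cdiag eqxx mulr1n mxE.
congr cdiag; apply/rowP => k; rewrite mxE [RHS]mxE gradLambdaE quad_form_diagE.
under eq_bigr => l _ do rewrite sqrt_colK //.
by have := sqrt_colK (th_ge0 k); rewrite expr2 => <-; ring.
Qed.

Lemma qmetric_muGradLambda (th z : 'rV[R]_m) :
  (forall k, 0 < th 0 k) -> \sum_k z 0 k = 0 ->
  qmetric (cdiag th) (muGradLambda c (cdiag th)) (cdiag z)
  = ((-2 * \sum_k c 0 k * z 0 k)%:C)%C.
Proof.
move=> th_gt0 z_sum0; rewrite muGradLambda_cdiag => [|k]; last exact: ltW.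
set S := \sum_l c 0 l * th 0 l.
rewrite qmetric_cdiag //; last exact: cdiag_hermitian.
under eq_bigr => k _ do rewrite cdiagE eqxx mulr1n mxE -rmorphM.
rewrite -rmorph_sum; congr (_%:C)%C.
transitivity (\sum_k (2 * S * z 0 k - 2 * (c 0 k * z 0 k))).
  apply: eq_bigr => k _; have th_neq0 : th 0 k != 0 by rewrite lt0r_neq0.
  by field.
by rewrite sumrB -!mulr_sumr z_sum0 mulr0 sub0r mulNr.
Qed.

Lemma Lambda_lift_cdiagE (L : 'M[R[i]]_m -> R)
    (hL : forall w : 'cV[R]_m, Sm w -> L (mu w) = 4%:R * Lambda c w)
    (v : 'rV[R]_m) :
  (forall k, 0 < v 0 k) -> \sum_k v 0 k = 1 -> L (cdiag v) = -2 * \sum_k c 0 k * v 0 k.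
Proof.
move=> v_gt0 v_sum1; rewrite -mu_sqrt_col => [|k]; last exact: ltW.
rewrite hL ?LambdaE; last exact: Sm_sqrt_col.
under eq_bigr => k _ do rewrite sqrt_colK ?ltW //.
by field.
Qed.

End SquaringMap.

Lemma curve_in_Pdot_near (R : realType) (m : nat) (r : R -> 'M[R[i]]_m) :
  (\forall t \near 0, Pdot (r t)) -> curve_in_Pdot r.
Proof.
move=> /nbhs_ballP [e e_gt0 near_e]; exists e => // t t_lt_e.
by apply: near_e; rewrite /ball /= sub0r normrN.
Qed.

Section AffineDiagonalCurve.
Variables (R : realType) (m : nat) (th z : 'rV[R]_m).

Let reC_affine t i j :
  reC (cdiag (th + t *: z) i j) = th 0 i *+ (i == j) + t * (z 0 i *+ (i == j)).
Proof. by rewrite reC_cdiag !mxE mulrnDl mulrnAr. Qed.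

Let imC_affine t i j : imC (cdiag (th + t *: z) i j) = 0 + t * 0.
Proof. by rewrite imC_cdiag mulr0 addr0. Qed.

Lemma smooth_curve_cdiag_affine : smooth_curve (fun t => cdiag (th + t *: z)).
Proof.
move=> i j; split.
  under eq_fun => t do rewrite reC_affine; exact: smooth_fun_affine.
under eq_fun => t do rewrite imC_affine; exact: smooth_fun_affine.
Qed.

Lemma velocity0_cdiag_affine : velocity0 (fun t => cdiag (th + t *: z)) (cdiag z).
Proof.
move=> i j; rewrite reC_cdiag imC_cdiag; split.
  under eq_fun => t do rewrite reC_affine; exact: is_derive_affine.
under eq_fun => t do rewrite imC_affine; exact: is_derive_affine.
Qed.

End AffineDiagonalCurve.

Theorem lemma2 (R : realType) (m : nat) (hm : (2 <= m)%N) (c : 'rV[R]_m)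
  (L : 'M[R[i]]_m -> R) (gradL : 'M[R[i]]_m -> 'M[R[i]]_m)
  (hgrad : is_qgradient L gradL)
  (hL : forall w : 'cV[R]_m, Sm w -> L (mu w) = 4%:R * Lambda c w) :
  forall Theta Z : 'M[R[i]]_m, Dm Theta -> TDm Z ->
    qmetric Theta (gradL Theta) Z = qmetric Theta (muGradLambda c Theta) Z.
Proof.
move=> _ _ [th [th_gt0 [th_sum1 ->]]] [z [z_sum0 ->]].
have curve_sum1 t : \sum_k (th + t *: z) 0 k = 1.
  under eq_bigr => k _ do rewrite !mxE.
  by rewrite big_split -mulr_sumr z_sum0 mulr0 /= addr0.
have curve_gt0 : \forall t \near (0:R), forall k, 0 < (th + t *: z) 0 k.
  apply: (filter_forall (nbhs_filter (0:R))) => k.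
  near=> t; rewrite !mxE.
  by near: t; exact: near0_affine_gt0.
have [_ gradLE] := hgrad _ (Pdot_cdiag th_gt0 th_sum1).
have curve_in : curve_in_Pdot (fun t => cdiag (th + t *: z)).
  apply: curve_in_Pdot_near; near=> t; apply: Pdot_cdiag (curve_sum1 t).
  by near: t.
have curve_at0 : cdiag (th + 0 *: z) = cdiag th by rewrite scale0r addr0.
have [d [Ld ->]] := gradLE _ (cdiag z) (smooth_curve_cdiag_affine th z) curve_in
  curve_at0 (velocity0_cdiag_affine th z).
rewrite qmetric_muGradLambda //; congr (_%:C)%C.
apply: (is_derive_near_affine (a := -2 * \sum_k c 0 k * th 0 k)) Ld.
near=> t; rewrite /= (Lambda_lift_cdiagE hL) //; last by near: t.
rewrite (eq_bigr (fun k => c 0 k * th 0 k + t * (c 0 k * z 0 k))) => [|k _].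
  by rewrite big_split /= -mulr_sumr; ring.
by rewrite !mxE; ring.
Unshelve. all: by end_near.
Qed.
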